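(* Let $f:\mathbb{R}^m\to\mathbb{R}^m$, $y_0\in\mathbb{R}^m$, $T>0$, $h>0$, and let $(y_n)$ be defined by $y_{n+1}=y_n+hf(y_n)$ for $0\le n<\lfloor T/h\rfloor$. For $R>0$ let $\Omega=\{y:\|y-y_0\|<R\}$ and suppose $f$ is Lipschitz on $\Omega$ with constant $\mathcal{L}_f:=\sup_{y_1\ne y_2,\ y_1,y_2\in\Omega}\frac{\|f(y_2)-f(y_1)\|}{\|y_2-y_1\|}\in(0,\infty)$. If \[ R>\frac{1}{\mathcal{L}_f}\Big((1+\mathcal{L}_fh)^{\lfloor T/h\rfloor}-1\Big)\|f(y_0)\|, \] then $\|y_n-y_0\|\le R$ for all $n=0,1,\dots,\lfloor T/h\rfloor$.
   Context: $\|\cdot\|$ is the Euclidean norm and $\lfloor x\rfloor$ the largest integer not exceeding $x$. *)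

From mathcomp Require Import all_boot all_order all_algebra reals.
Set Implicit Arguments. Unset Strict Implicit. Unset Printing Implicit Defensive.
Import Order.TTheory GRing.Theory Num.Theory.
Local Open Scope ring_scope.

Definition enorm (R : realType) (m : nat) (v : 'rV[R]_m) : R :=
  Num.sqrt (\sum_(i < m) v ord0 i ^+ 2).

Definition oball (R : realType) (m : nat) (c : 'rV[R]_m) (r : R) (y : 'rV[R]_m) : Prop :=
  enorm (y - c) < r.

Definition lip_quotient_ub (R : realType) (m : nat) (Om : 'rV[R]_m -> Prop)
  (f : 'rV[R]_m -> 'rV[R]_m) (M : R) : Prop :=
  forall y1 y2, Om y1 -> Om y2 -> y1 <> y2 ->
    enorm (f y2 - f y1) / enorm (y2 - y1) <= M.

Definition is_lip_sup (R : realType) (m : nat) (Om : 'rV[R]_m -> Prop)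
  (f : 'rV[R]_m -> 'rV[R]_m) (L : R) : Prop :=
  lip_quotient_ub Om f L /\ (forall M, lip_quotient_ub Om f M -> L <= M).

From mathcomp Require Import all_boot all_order all_algebra reals.
From mathcomp Require Import ring lra.
Import Order.TTheory GRing.Theory Num.Theory.
Set Implicit Arguments. Unset Strict Implicit. Unset Printing Implicit Defensive.
Local Open Scope ring_scope.

(* Discrete Gronwall argument.  As long as the iterate y_n stays in the ball,
   ||f(y_n)|| <= ||f(y_0)|| + L ||y_n - y_0||, so e_n := ||y_n - y_0|| obeys
   e_{n+1} <= (1 + L h) e_n + h ||f(y_0)||, whence
   e_n <= L^-1 ((1 + L h)^n - 1) ||f(y_0)||.  This bound increases with n and
   at n = floor(T/h) it is below R by hypothesis, so the iterates never leave
   the ball and the induction goes through up to floor(T/h). *)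

Section EuclideanNorm.
Variables (R : realType) (m : nat).
Implicit Types (a b : 'I_m -> R) (u v : 'rV[R]_m).

Lemma sqr_sum_mul_le a b :
  (\sum_i a i * b i) ^+ 2 <= (\sum_i a i ^+ 2) * (\sum_i b i ^+ 2).
Proof.
set A := \sum_i a i ^+ 2; set B := \sum_i b i ^+ 2; set C := \sum_i a i * b i.
have lagrange : \sum_i \sum_j (a i * b j - a j * b i) ^+ 2 = 2 * (A * B - C ^+ 2).
  transitivity (\sum_i \sum_j
      (a i ^+ 2 * b j ^+ 2 + b i ^+ 2 * a j ^+ 2 - 2 * (a i * b i) * (a j * b j))).
    by apply: eq_bigr => i _; apply: eq_bigr => j _; ring.
  under eq_bigr do rewrite sumrB big_split /= -!mulr_sumr -/A -/B -/C.
  by rewrite sumrB big_split /= -!mulr_suml -mulr_sumr -/A -/B -/C; ring.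
have : 0 <= \sum_i \sum_j (a i * b j - a j * b i) ^+ 2.
  by do 2!apply: sumr_ge0 => ? _; exact: sqr_ge0.
rewrite lagrange; lra.
Qed.

Lemma enorm_ge0 v : 0 <= enorm v.
Proof. exact: sqrtr_ge0. Qed.

Lemma sqr_enorm v : enorm v ^+ 2 = \sum_i v ord0 i ^+ 2.
Proof. by rewrite sqr_sqrtr // sumr_ge0 // => i _; exact: sqr_ge0. Qed.

Lemma enorm0 : enorm (0 : 'rV[R]_m) = 0.
Proof. by rewrite /enorm big1 ?sqrtr0 // => i _; rewrite mxE expr0n. Qed.

Lemma enorm_eq0 v : (enorm v == 0) = (v == 0).
Proof.
apply/idP/eqP => [|->]; last by rewrite enorm0.
rewrite -sqrf_eq0 sqr_enorm psumr_eq0 => [/allP v0|i _]; last exact: sqr_ge0.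
apply/matrixP => i j; rewrite (ord1 i) mxE.
by apply/eqP; rewrite -sqrf_eq0; apply: v0 (mem_index_enum j).
Qed.

Lemma enormZ (c : R) v : enorm (c *: v) = `|c| * enorm v.
Proof.
rewrite /enorm -sqrtr_sqr -sqrtrM ?sqr_ge0 // mulr_sumr.
by congr Num.sqrt; apply: eq_bigr => i _; rewrite mxE exprMn.
Qed.

Lemma enormD u v : enorm (u + v) <= enorm u + enorm v.
Proof.
have cs : \sum_i u ord0 i * v ord0 i <= enorm u * enorm v.
  apply: le_trans (ler_norm _) _.
  rewrite -(ler_pXn2r (_ : 0 < 2)%N) ?nnegrE ?mulr_ge0 ?enorm_ge0 //.
  by rewrite real_normK ?num_real // exprMn !sqr_enorm sqr_sum_mul_le.
rewrite -(ler_pXn2r (_ : 0 < 2)%N) ?nnegrE ?addr_ge0 ?enorm_ge0 //.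
have -> : enorm (u + v) ^+ 2 =
    enorm u ^+ 2 + enorm v ^+ 2 + 2 * \sum_i u ord0 i * v ord0 i.
  rewrite !sqr_enorm mulr_sumr -!big_split /=.
  by apply: eq_bigr => i _; rewrite mxE; ring.
lra.
Qed.

End EuclideanNorm.

Lemma lip_quotient_ub_le (R : realType) (m : nat) (Om : 'rV[R]_m -> Prop)
    (f : 'rV[R]_m -> 'rV[R]_m) (L : R) x z :
  lip_quotient_ub Om f L -> Om x -> Om z ->
  enorm (f x - f z) <= L * enorm (x - z).
Proof.
move=> lip Ox Oz; have [->|neq_xz] := eqVneq x z.
  by rewrite !subrr enorm0 mulr0.
have nxz_gt0 : 0 < enorm (x - z).
  by rewrite lt_def enorm_eq0 subr_eq0 neq_xz enorm_ge0.
by rewrite -ler_pdivrMr // lip // => /eqP; rewrite eq_sym (negbTE neq_xz).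
Qed.

Section EulerBound.
Variables (R : realType) (L h F : R).

Definition euler_bound (n : nat) : R := L^-1 * ((1 + L * h) ^+ n - 1) * F.

Lemma euler_bound0 : euler_bound 0 = 0.
Proof. by rewrite /euler_bound expr0 subrr mulr0 mul0r. Qed.

Lemma euler_boundS n : L != 0 ->
  euler_bound n.+1 = (1 + L * h) * euler_bound n + h * F.
Proof. by move=> L0; rewrite /euler_bound exprS; field. Qed.

Lemma euler_bound_le n k : 0 < L -> 0 <= h -> 0 <= F -> (n <= k)%N ->
  euler_bound n <= euler_bound k.
Proof.
move=> L0 h0 F0 nk; rewrite /euler_bound ler_wpM2r //.
rewrite ler_wpM2l ?invr_ge0 ?(ltW L0) //.
by rewrite lerD2r ler_weXn2l // lerDl mulr_ge0 ?(ltW L0).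
Qed.

End EulerBound.

Section EulerIterates.
Variables (R : realType) (m : nat) (f : 'rV[R]_m -> 'rV[R]_m) (y0 : 'rV[R]_m).
Variables (Rad L h : R).
Hypothesis lip : lip_quotient_ub (oball y0 Rad) f L.
Hypothesis h_ge0 : 0 <= h.

Lemma euler_step_dist x : oball y0 Rad x ->
  enorm (x + h *: f x - y0) <= (1 + L * h) * enorm (x - y0) + h * enorm (f y0).
Proof.
move=> Ox; have Oy0 : oball y0 Rad y0.
  by rewrite /oball subrr enorm0 (le_lt_trans (enorm_ge0 _) Ox).
have fx_le : enorm (f x) <= enorm (f y0) + L * enorm (x - y0).
  rewrite -[f x](subrK (f y0)) addrC (le_trans (enormD _ _)) // lerD2l.
  exact: lip_quotient_ub_le lip Ox Oy0.
rewrite addrAC (le_trans (enormD _ _)) // enormZ ger0_norm //.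
have := ler_wpM2l h_ge0 fx_le; lra.
Qed.

Variables (y : nat -> 'rV[R]_m) (N : nat).
Hypothesis y_0 : y 0%N = y0.
Hypothesis y_S : forall n, (n < N)%N -> y n.+1 = y n + h *: f (y n).
Hypothesis L_gt0 : 0 < L.
Hypothesis bound_lt_Rad : euler_bound L h (enorm (f y0)) N < Rad.

Lemma euler_dist_le n : (n <= N)%N ->
  enorm (y n - y0) <= euler_bound L h (enorm (f y0)) n.
Proof.
elim: n => [_|n IH lt_nN]; first by rewrite y_0 subrr enorm0 euler_bound0.
have le_nN := ltnW lt_nN.
have Oyn : oball y0 Rad (y n).
  rewrite /oball (le_lt_trans (IH le_nN)) // (le_lt_trans _ bound_lt_Rad) //.
  exact: euler_bound_le (enorm_ge0 _) le_nN.
rewrite y_S // euler_boundS ?lt0r_neq0 // (le_trans (euler_step_dist Oyn)) //.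
by rewrite lerD2r ler_wpM2l ?IH // addr_ge0 // mulr_ge0 // ltW.
Qed.

End EulerIterates.

Theorem lemma3p8 (R : realType) (m : nat) (f : 'rV[R]_m -> 'rV[R]_m)
  (y0 : 'rV[R]_m) (T h : R) (y : nat -> 'rV[R]_m) (N : nat) (Rad Lf : R) :
  0 < T -> 0 < h ->
  (N : int) = Num.floor (T / h) ->
  y 0%N = y0 ->
  (forall n : nat, (n < N)%N -> y n.+1 = y n + h *: f (y n)) ->
  0 < Rad ->
  is_lip_sup (oball y0 Rad) f Lf -> 0 < Lf ->
  Rad > Lf^-1 * ((1 + Lf * h) ^+ N - 1) * enorm (f y0) ->
  forall n : nat, (n <= N)%N -> enorm (y n - y0) <= Rad.
Proof.
move=> _ h_gt0 _ y_0 y_S _ [lip _] Lf_gt0 bound_lt_Rad n le_nN.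
apply: le_trans (euler_dist_le lip (ltW h_gt0) y_0 y_S Lf_gt0 bound_lt_Rad le_nN) _.
apply/ltW/(le_lt_trans _ bound_lt_Rad).
exact: euler_bound_le (ltW h_gt0) (enorm_ge0 _) le_nN.
Qed.
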